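(* Let $X$ be a real Banach space with the Ball Dentable Property ($BDP$). Then for every separable closed subspace $Y$ of $X$ there exists a separable closed subspace $Z$ of $X$ with $Y\subseteq Z$ such that $Z$ has $BDP$.
   Context: For a real Banach space $X$, $B_X$ denotes its closed unit ball and $X^*$ its dual. A slice of a bounded set $C\subseteq X$ is a set $S(C,x^*,\alpha)=\{x\in C: x^*(x)>\sup x^*(C)-\alpha\}$ with $x^*\in X^*$, $\|x^*\|=1$, $\alpha>0$. $X$ has the Ball Dentable Property ($BDP$) if for every $\varepsilon>0$ there is a slice of $B_X$ of diameter less than $\varepsilon$. *)

From HB Require Import structures.
From mathcomp Require Import all_boot all_order all_algebra.
From mathcomp Require Import all_classical all_reals all_analysis.
Set Implicit Arguments. Unset Strict Implicit. Unset Printing Implicit Defensive.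
Import Order.TTheory GRing.Theory Num.Theory.
Import numFieldNormedType.Exports.
Local Open Scope classical_set_scope.
Local Open Scope ring_scope.

Section BDP.
Variables (R : realType) (X : normedModType R).

Definition linear_subspace (S : set X) : Prop :=
  S 0 /\ (forall x y, S x -> S y -> S (x + y)) /\
  (forall (a : R) x, S x -> S (a *: x)).

Definition closed_subspace (S : set X) : Prop :=
  linear_subspace S /\ closed S.

Definition separable_set (S : set X) : Prop :=
  exists D : set X, [/\ countable D, D `<=` S & S `<=` closure D].

Definition unit_ball_of (S : set X) : set X :=
  [set x | S x /\ `|x| <= 1].

Definition dual_elt (S : set X) (f : X -> R) : Prop :=
  [/\ (forall x y, S x -> S y -> f (x + y) = f x + f y),
      (forall (a : R) x, S x -> f (a *: x) = a * f x) &
      {within S, continuous f}].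

Definition dual_norm (S : set X) (f : X -> R) : \bar R :=
  ereal_sup [set (`|f x|)%:E | x in unit_ball_of S].

Definition slice (C : set X) (f : X -> R) (alpha : R) : set X :=
  [set x | C x /\ sup (f @` C) - alpha < f x].

Definition diam (A : set X) : \bar R :=
  ereal_sup [set (`|x - y|)%:E | x in A & y in A].

Definition BDP_sub (S : set X) : Prop :=
  forall eps : R, 0 < eps ->
    exists (f : X -> R) (alpha : R),
      [/\ dual_elt S f, dual_norm S f = 1%:E, 0 < alpha &
          (diam (slice (unit_ball_of S) f alpha) < eps%:E)%E].

Definition BDP : Prop := BDP_sub setT.

End BDP.

From HB Require Import structures.
From mathcomp Require Import all_boot all_order all_algebra.
From mathcomp Require Import all_classical all_reals all_analysis.
From mathcomp Require Import lra.
Set Implicit Arguments. Unset Strict Implicit. Unset Printing Implicit Defensive.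
Import Order.TTheory GRing.Theory Num.Theory.
Import numFieldNormedType.Exports.
Local Open Scope classical_set_scope.
Local Open Scope ring_scope.

(* For each n, BDP of X yields a norm-one functional f_n and a
   slice S(B_X, f_n, a_n) of diameter < 1/(n+1); pick x_n in B_X with
   f_n x_n > 1 - g_n, where g_n = min(a_n, 1)/2 ("a deep point" of the slice).
   Let Z be the closure of the rational span of a countable dense subset of Y
   together with all the x_n: Z is a separable closed subspace containing Y.
   If M = sup f_n(B_Z), then M >= f_n x_n > 1 - g_n, and g = f_n / M is a
   norm-one functional on Z whose slice S(B_Z, g, g_n) lies inside
   S(B_X, f_n, a_n); hence B_Z has slices of arbitrarily small diameter. *)

Section NormOneFunctionals.
Variables (R : realType) (X : normedModType R).

Lemma linear_subspaceT : linear_subspace (@setT X).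
Proof. by []. Qed.

Lemma unit_ball0 (S : set X) : linear_subspace S -> unit_ball_of S 0.
Proof. by move=> [S0 _]; split => //; rewrite normr0. Qed.

Lemma unit_ballN (S : set X) x :
  linear_subspace S -> unit_ball_of S x -> unit_ball_of S (- x).
Proof.
move=> [_ [_ SZ]] [Sx nx]; split; last by rewrite normrN.
by rewrite -scaleN1r; apply: SZ.
Qed.

Lemma has_sup_image_ball (S : set X) (h : X -> R) M : linear_subspace S ->
  (forall x, unit_ball_of S x -> `|h x| <= M) -> has_sup (h @` unit_ball_of S).
Proof.
move=> LS hM; split; first by exists (h 0), 0 => //; exact: unit_ball0.
by exists M => _ [x Bx <-]; apply: le_trans (hM x Bx); apply: ler_norm.
Qed.

(* Since the unit ball is symmetric, the dual norm of a bounded homogeneous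
   functional is the plain supremum of its values on the ball. *)
Lemma dual_normE (S : set X) (h : X -> R) M : linear_subspace S ->
  (forall (a : R) x, S x -> h (a *: x) = a * h x) ->
  (forall x, unit_ball_of S x -> `|h x| <= M) ->
  dual_norm S h = (sup (h @` unit_ball_of S))%:E.
Proof.
move=> LS hZ hM; have hsup := has_sup_image_ball LS hM.
have ub : has_ubound [set `|h x| | x in unit_ball_of S].
  by exists M => _ [x Bx <-]; exact: hM.
have ne : [set `|h x| | x in unit_ball_of S] !=set0.
  by exists `|h 0|, 0 => //; exact: unit_ball0.
rewrite /dual_norm -(image_comp (fun x => `|h x|) EFin) ereal_sup_EFin //.
congr (_%:E); apply: le_anti; apply/andP; split.
  apply: ge_sup => // _ [x Bx <-].
  have hN : h (- x) = - h x by rewrite -scaleN1r hZ ?mulN1r //; case: Bx.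
  have [hx0|hx0] := leP 0 (h x).
    by rewrite ger0_norm //; apply: sup_upper_bound => //; exists x.
  rewrite ltr0_norm // -hN; apply: sup_upper_bound => //.
  by exists (- x) => //; exact: unit_ballN.
apply: ge_sup; first by case: hsup.
move=> _ [x Bx <-]; apply: le_trans (ler_norm _) _.
by apply: sup_upper_bound; [split | exists x].
Qed.

Lemma dual_norm1_le (f : X -> R) : dual_norm setT f = 1%:E ->
  forall x, unit_ball_of setT x -> `|f x| <= 1.
Proof.
by move=> f1 x Bx; rewrite -lee_fin -f1; apply: ereal_sup_ubound; exists x.
Qed.

Lemma dual_norm1_sup (f : X -> R) : dual_elt setT f -> dual_norm setT f = 1%:E ->
  sup (f @` unit_ball_of setT) = 1.
Proof.
move=> [_ fZ _] f1.
have := @dual_normE setT f 1 linear_subspaceT (fun a x _ => fZ a x I)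
  (dual_norm1_le f1).
by rewrite f1 => -[->].
Qed.

Lemma dual_norm1_almost_attained (f : X -> R) (gam : R) :
  dual_elt setT f -> dual_norm setT f = 1%:E -> 0 < gam ->
  exists2 x, unit_ball_of setT x & 1 - gam < f x.
Proof.
move=> df f1 gam0.
have [_ [x Bx <-]] := sup_adherent gam0
  (has_sup_image_ball linear_subspaceT (dual_norm1_le f1)).
by rewrite dual_norm1_sup //; exists x.
Qed.

Section Restriction.
Variables (S : set X) (f : X -> R).
Hypotheses (LS : linear_subspace S) (df : dual_elt setT f)
  (f1 : dual_norm setT f = 1%:E).

Let M := sup (f @` unit_ball_of S).

Let BS_BX y : unit_ball_of S y -> unit_ball_of setT y.
Proof. by case. Qed.

Lemma restriction_has_sup : has_sup (f @` unit_ball_of S).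
Proof.
exact: has_sup_image_ball LS (fun y By => dual_norm1_le f1 (BS_BX By)).
Qed.

Lemma restriction_sup_ge y : unit_ball_of S y -> f y <= M.
Proof. by move=> By; apply: sup_upper_bound; [exact: restriction_has_sup | exists y]. Qed.

Hypothesis M_gt0 : 0 < M.

Let g y := f y / M.

Let g_bound y : unit_ball_of S y -> `|g y| <= M^-1.
Proof.
move=> By; rewrite /g normrM normfV (gtr0_norm M_gt0) -[leRHS]mul1r.
by rewrite ler_pM2r ?invr_gt0 //; apply: (dual_norm1_le f1); exact: BS_BX.
Qed.

Lemma restriction_dual_elt : dual_elt S g.
Proof.
have [fD fZ fc] := df; split.
- by move=> y z _ _; rewrite /g fD // mulrDl.
- by move=> a y _; rewrite /g fZ // mulrA.
- apply: continuous_subspaceT => y; apply: cvgMr_tmp.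
  by have := (proj2 (continuous_subspace_setT f)) fc y.
Qed.

Lemma restriction_sup : sup (g @` unit_ball_of S) = 1.
Proof.
have hsg := has_sup_image_ball LS g_bound.
apply: le_anti; apply/andP; split.
  apply: ge_sup; first by case: hsg.
  by move=> _ [y By <-]; rewrite /g ler_pdivrMr // mul1r; exact: restriction_sup_ge.
have : M <= M * sup (g @` unit_ball_of S).
  apply: ge_sup; first by case: restriction_has_sup.
  move=> _ [y By <-]; rewrite -ler_pdivrMl // mulrC.
  by apply: sup_upper_bound => //; exists y.
by rewrite -[leLHS]mulr1 ler_pM2l.
Qed.

Lemma restriction_dual_norm : dual_norm S g = 1%:E.
Proof.
have [_ gZ _] := restriction_dual_elt.
by rewrite (dual_normE LS gZ g_bound) restriction_sup.
Qed.

(* If gam <= 1 and 2 gam <= alpha, and S contains a point of B_X where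
   f > 1 - gam, then the slice of B_S by g of depth gam lies in the slice
   of B_X by f of depth alpha: f y > M (1 - gam) >= (1 - gam)^2 > 1 - alpha. *)
Lemma restriction_slice_sub (gam alpha : R) x :
  gam <= 1 -> gam * 2 <= alpha -> unit_ball_of S x -> 1 - gam < f x ->
  slice (unit_ball_of S) g gam `<=` slice (unit_ball_of setT) f alpha.
Proof.
move=> gam1 gam_alpha Bx fx y [By gy]; split; first exact: BS_BX.
rewrite dual_norm1_sup //.
move: gy; rewrite restriction_sup /g ltr_pdivlMr // => gy.
have Mx := restriction_sup_ge Bx.
have : (1 - gam) * (1 - gam) <= M * (1 - gam) by apply: ler_wpM2r; lra.
nra.
Qed.

End Restriction.

Lemma slice_of_subspace (S : set X) (f : X -> R) (alpha : R) x :
  linear_subspace S -> dual_elt setT f -> dual_norm setT f = 1%:E -> 0 < alpha ->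
  unit_ball_of S x -> 1 - Num.min alpha 1 / 2 < f x ->
  exists (g : X -> R) (beta : R),
    [/\ dual_elt S g, dual_norm S g = 1%:E, 0 < beta &
        slice (unit_ball_of S) g beta `<=` slice (unit_ball_of setT) f alpha].
Proof.
move=> LS df f1 alpha0 Bx fx; set gam := Num.min alpha 1 / 2 in fx.
have gam0 : 0 < gam by rewrite divr_gt0 // lt_min alpha0 ltr01.
have gam1 : gam <= 1 by rewrite /gam ler_pdivrMr // ge_min; apply/orP; right; lra.
have gam_alpha : gam * 2 <= alpha by rewrite mulfVK ?pnatr_eq0 // ge_min lexx.
have M_gt0 : 0 < sup (f @` unit_ball_of S).
  by apply: lt_le_trans (restriction_sup_ge LS f1 Bx); lra.
exists (fun y => f y / sup (f @` unit_ball_of S)), gam; split => //.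
- exact: restriction_dual_elt.
- exact: restriction_dual_norm.
- exact: restriction_slice_sub Bx fx.
Qed.

Lemma diam_subset (A B : set X) : A `<=` B -> (diam A <= diam B)%E.
Proof.
move=> AB; apply: ereal_sup_le => _ [a Aa [b Ab <-]].
by exists a; [exact: AB | exists b; [exact: AB | done]].
Qed.

Definition deep_point (eps : R) (x : X) : Prop :=
  exists (f : X -> R) (alpha : R),
    [/\ dual_elt setT f, dual_norm setT f = 1%:E, 0 < alpha,
        (diam (slice (unit_ball_of setT) f alpha) < eps%:E)%E &
        unit_ball_of setT x /\ 1 - Num.min alpha 1 / 2 < f x].

Lemma BDP_deep_point : BDP X -> forall eps : R, 0 < eps -> exists x, deep_point eps x.
Proof.
move=> bdp eps eps0; have [f [alpha [df f1 alpha0 small]]] := bdp _ eps0.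
have [|x Bx fx] := @dual_norm1_almost_attained f (Num.min alpha 1 / 2) df f1.
  by rewrite divr_gt0 // lt_min alpha0 ltr01.
by exists x, f, alpha.
Qed.

Lemma BDP_sub_of_deep_points (S : set X) : linear_subspace S ->
  (forall n : nat, exists2 x, S x & deep_point n.+1%:R^-1 x) -> BDP_sub S.
Proof.
move=> LS deep eps eps0.
have [n _ /(_ n (leqnn n)) n_eps] := near_infty_natSinv_lt (PosNum eps0).
have [x Sx [f [alpha [df f1 alpha0 small [Bx fx]]]]] := deep n.
have [g [beta [dg g1 beta0 sub]]] :=
  slice_of_subspace LS df f1 alpha0 (conj Sx (proj2 Bx)) fx.
exists g, beta; split => //.
by apply: le_lt_trans (diam_subset sub) (lt_trans small _); rewrite lte_fin.
Qed.

End NormOneFunctionals.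

Section RationalSpan.
Variables (R : realType) (X : normedModType R).

Lemma closureP (A : set X) x :
  closure A x <-> forall e : R, 0 < e -> exists2 y, A y & `|x - y| < e.
Proof.
split.
  move=> cx e e0; have [y [Ay bxy]] := cx _ (nbhsx_ballx x e e0).
  by exists y => //; move: bxy; rewrite -ball_normE.
move=> xA B /nbhs_ballP [e /= e0 eB].
by have [y Ay xy] := xA e e0; exists y; split => //; apply: eB; rewrite -ball_normE.
Qed.

Lemma closure_add (A : set X) x y : (forall a b, A a -> A b -> A (a + b)) ->
  closure A x -> closure A y -> closure A (x + y).
Proof.
move=> AD /closureP xA /closureP yA; apply/closureP => e e0.
have e20 : 0 < e / 2 by rewrite divr_gt0.
have [a Aa xa] := xA _ e20; have [b Ab yb] := yA _ e20.
exists (a + b); first exact: AD.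
rewrite opprD addrACA; apply: le_lt_trans (ler_normD _ _) _.
by rewrite [e]splitr ltrD.
Qed.

Lemma rat_approx (c e : R) : 0 < e -> exists q : rat, `|c - ratr q| < e.
Proof.
move=> e0; have [||y [cy [q _ qy]]] := @dense_rat R (ball c e).
- by exists c; apply: ballxx.
- exact: ball_open.
by exists q; rewrite qy; move: cy; rewrite -ball_normE.
Qed.

Lemma closure_scale (A : set X) x (c : R) :
  (forall (q : rat) a, A a -> A (ratr q *: a)) ->
  closure A x -> closure A (c *: x).
Proof.
move=> AZ /closureP xA; apply/closureP => e e0.
have e20 : 0 < e / 2 by rewrite divr_gt0.
have [q cq] := @rat_approx c _ (divr_gt0 e20 (ltr_wpDl (normr_ge0 x) ltr01)).
have [a Aa xa] :=
  xA _ (divr_gt0 e20 (ltr_wpDl (normr_ge0 (ratr q : R)) ltr01)).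
exists (ratr q *: a); first exact: AZ.
have -> : c *: x - ratr q *: a = (c - ratr q) *: x + ratr q *: (x - a).
  by rewrite scalerBl scalerBr addrA subrK.
apply: le_lt_trans (ler_normD _ _) _; rewrite [e]splitr normrZ [`|ratr q *: _|]normrZ.
apply: ltrD.
  apply: (@le_lt_trans _ _ (`|c - ratr q| * (`|x| + 1))).
    by rewrite ler_wpM2l // lerDl.
  by rewrite -ltr_pdivlMr // ltr_wpDl.
apply: (@le_lt_trans _ _ ((`|ratr q : R| + 1) * `|x - a|)).
  by rewrite ler_wpM2r // lerDl.
by rewrite mulrC -ltr_pdivlMr // ltr_wpDl.
Qed.

Variables (T : countType) (u : T -> X).

Definition rat_comb (s : seq (rat * T)) : X := \sum_(p <- s) ratr p.1 *: u p.2.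

Definition rat_span : set X := range rat_comb.

Lemma rat_span_gen t : rat_span (u t).
Proof. by exists [:: (1%Q, t)] => //; rewrite /rat_comb big_seq1 rmorph1 scale1r. Qed.

Lemma rat_span_countable : countable rat_span.
Proof. exact: (sub_countable (card_image_le rat_comb setT) (countableP _)). Qed.

Lemma closed_subspace_closure_rat_span : closed_subspace (closure rat_span).
Proof.
split; last exact: closed_closure.
split; [|split].
- by apply: subset_closure; exists [::]; rewrite // /rat_comb big_nil.
- move=> x y; apply: closure_add => _ _ [s1 _ <-] [s2 _ <-].
  by exists (s1 ++ s2); rewrite // /rat_comb big_cat.
- move=> a x; apply: closure_scale => q _ [s _ <-].
  exists (map (fun p => (q * p.1, p.2)) s) => //.
  rewrite /rat_comb big_map scaler_sumr; apply: eq_bigr => p _ /=.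
  by rewrite rmorphM scalerA.
Qed.

Lemma separable_closure_rat_span : separable_set (closure rat_span).
Proof. by exists rat_span; split; [exact: rat_span_countable | exact: subset_closure |]. Qed.

End RationalSpan.

Theorem mainTheorem2 (R : realType) (X : completeNormedModType R) :
  BDP X ->
  forall Y : set X, closed_subspace Y -> separable_set Y ->
  exists Z : set X,
    [/\ closed_subspace Z, separable_set Z, Y `<=` Z & BDP_sub Z].
Proof.
move=> bdp Y _ [DY [DY_countable _ Y_DY]].
have deep n : exists x : X, deep_point n.+1%:R^-1 x.
  by apply: (BDP_deep_point bdp); rewrite invr_gt0.
have [xs deep_xs] := choice deep.
have [d d_onto] : exists d : nat -> X, set_surj setT DY d by apply/pcard_surjP.
pose u (p : nat + nat) := match p with inl i => d i | inr n => xs n end.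
pose Z := closure (rat_span u).
have xs_Z n : Z (xs n) := subset_closure (rat_span_gen u (inr n)).
exists Z; split.
- exact: closed_subspace_closure_rat_span.
- exact: separable_closure_rat_span.
- apply: subset_trans Y_DY _; apply: closureS => _ /d_onto [i _ <-].
  exact: (rat_span_gen u (inl i)).
- apply: BDP_sub_of_deep_points.
    exact: (closed_subspace_closure_rat_span u).1.
  by move=> n; exists (xs n).
Qed.
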